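(* Let $(V,\nu)$ and $(W,\omega)$ be matrix gauge spaces with $\mathbb{C}$-proper matrix gauges, and let $(V,V_{ac},h)$ and $(W,W_{ac},h')$ be the induced triples, i.e. $V_{ac}^n=\{x:\nu_n(-x)=0\}$, $h_n(x)=\max\{\nu_n(x),\nu_n(-x)\}$, and similarly for $W$ with $\omega$. Let $\phi:V\to W$ be linear. (i) If $\phi$ is completely gauge contractive (i.e. $\omega_n(\phi^{(n)}(x))\le\nu_n(x)$ for all $n$ and $x\in M_n(V)$), then $\phi$ is real-cpcc. (ii) If $\phi$ is real-cpcc, then $\omega_n(\phi^{(n)}(x))\le\nu_{max}^n(x)$ for all $n$ and $x\in M_n(V)$, where $\nu_{max}^n(x)=\inf\{h_n(x+p):p\in V_{ac}^n\}$.
   Context: For a complex vector space $V$, $M_n(V)$ is the $n\times n$ matrices over $V$ and $\phi^{(n)}$ is the entrywise application of a linear map $\phi$. A matrix gauge is a sequence $\{\nu_n:M_n(V)\to[0,\infty)\}$ with $\nu_n(x+y)\le\nu_n(x)+\nu_n(y)$, $\nu_n(tx)=t\nu_n(x)$ ($t\ge0$), $\nu_k(X^*AX)\le\|X\|^2\nu_n(A)$ for scalar $X\in M_{n,k}$, and $\nu_{n+m}(A\oplus B)=\max\{\nu_n(A),\nu_m(B)\}$; it is $\mathbb{C}$-proper if $\nu_1(i^kz)=0$ for $k=0,1,2,3$ implies $z=0$. A linear map $\phi:V\to W$ is real-completely positive if $\phi^{(n)}(V_{ac}^n)\subseteq W_{ac}^n$ for all $n$, real-completely contractive if $h'_n(\phi^{(n)}(x))\le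 h_n(x)$ for all $n,x$, and real-cpcc if it is both. *)

From mathcomp Require Import ssreflect ssrfun ssrbool eqtype ssrnat seq fintype bigop.
From Stdlib Require Import Reals Classical ClassicalEpsilon.
Set Implicit Arguments.
Unset Strict Implicit.
Unset Printing Implicit Defensive.
Open Scope R_scope.

Record C := mkC { Cre : R; Cim : R }.
Definition C0 : C := mkC 0 0.
Definition C1 : C := mkC 1 0.
Definition Ci : C := mkC 0 1.
Definition Cadd (a b : C) : C := mkC (Cre a + Cre b) (Cim a + Cim b).
Definition Cmul (a b : C) : C :=
  mkC (Cre a * Cre b - Cim a * Cim b) (Cre a * Cim b + Cim a * Cre b).
Definition Cconj (a : C) : C := mkC (Cre a) (- Cim a).
Definition RtoC (t : R) : C := mkC t 0.
Definition Cnorm2 (a : C) : R := Cre a * Cre a + Cim a * Cim a.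

Record CVS := {
  vT :> Type;
  vadd : vT -> vT -> vT;
  vzero : vT;
  vopp : vT -> vT;
  vscal : C -> vT -> vT;
  vaddA : forall x y z, vadd x (vadd y z) = vadd (vadd x y) z;
  vaddC : forall x y, vadd x y = vadd y x;
  vadd0 : forall x, vadd x vzero = x;
  vaddN : forall x, vadd x (vopp x) = vzero;
  vscalDv : forall a x y, vscal a (vadd x y) = vadd (vscal a x) (vscal a y);
  vscalDs : forall a b x, vscal (Cadd a b) x = vadd (vscal a x) (vscal b x);
  vscalA : forall a b x, vscal a (vscal b x) = vscal (Cmul a b) x;
  vscal1 : forall x, vscal C1 x = x
}.

Definition is_linear (V W : CVS) (phi : V -> W) : Prop :=
  (forall x y, phi (vadd x y) = vadd (phi x) (phi y)) /\
  (forall (a : C) x, phi (vscal a x) = vscal a (phi x)).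

Definition Mat (V : Type) (n m : nat) := 'I_n -> 'I_m -> V.

Definition madd (V : CVS) n m (A B : Mat V n m) : Mat V n m :=
  fun i j => vadd (A i j) (B i j).
Definition mopp (V : CVS) n m (A : Mat V n m) : Mat V n m :=
  fun i j => vopp (A i j).
Definition mrscal (V : CVS) n m (t : R) (A : Mat V n m) : Mat V n m :=
  fun i j => vscal (RtoC t) (A i j).
Definition mapm (V W : CVS) (phi : V -> W) n m (A : Mat V n m) : Mat W n m :=
  fun i j => phi (A i j).

(* X^* A X for a scalar matrix X in M_{n,k}(C) and A in M_n(V) *)
Definition cmpl (V : CVS) n k (X : 'I_n -> 'I_k -> C) (A : Mat V n n) : Mat V k k :=
  fun i j => \big[@vadd V/vzero V]_(p < n) \big[@vadd V/vzero V]_(q < n)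
                vscal (Cmul (Cconj (X p i)) (X q j)) (A p q).

Definition dsum (V : CVS) n m (A : Mat V n n) (B : Mat V m m) : Mat V (n + m)%nat (n + m)%nat :=
  fun i j => match fintype.split i, fintype.split j with
             | inl a, inl b => A a b
             | inr a, inr b => B a b
             | _, _ => vzero V
             end.

Definition cvnorm k (v : 'I_k -> C) : R := sqrt (\big[Rplus/0]_(i < k) Cnorm2 (v i)).
Definition cmatvec n k (X : 'I_n -> 'I_k -> C) (v : 'I_k -> C) : 'I_n -> C :=
  fun p => \big[Cadd/C0]_(j < k) Cmul (X p j) (v j).
Definition opnorm n k (X : 'I_n -> 'I_k -> C) : R :=
  epsilon (inhabits 0)
    (fun t => is_lub (fun r => exists v, cvnorm v <= 1 /\ r = cvnorm (cmatvec X v)) t).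

Definition is_matrix_gauge (V : CVS) (nu : forall n, Mat V n n -> R) : Prop :=
  (forall n (x : Mat V n n), (0 < n)%nat -> 0 <= nu n x) /\
  (forall n (x y : Mat V n n), (0 < n)%nat -> nu n (madd x y) <= nu n x + nu n y) /\
  (forall n (t : R) (x : Mat V n n), (0 < n)%nat -> 0 <= t -> nu n (mrscal t x) = t * nu n x) /\
  (forall n k (X : 'I_n -> 'I_k -> C) (A : Mat V n n), (0 < n)%nat -> (0 < k)%nat ->
      nu k (cmpl X A) <= (opnorm X) ^ 2 * nu n A) /\
  (forall n m (A : Mat V n n) (B : Mat V m m), (0 < n)%nat -> (0 < m)%nat ->
      nu (n + m)%nat (dsum A B) = Rmax (nu n A) (nu m B)).

Definition m1 (V : CVS) (z : V) : Mat V 1 1 := fun _ _ => z.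

Definition C_proper (V : CVS) (nu : forall n, Mat V n n -> R) : Prop :=
  forall z : V,
    nu 1%nat (m1 z) = 0 -> nu 1%nat (m1 (vscal Ci z)) = 0 ->
    nu 1%nat (m1 (vscal (Cmul Ci Ci) z)) = 0 ->
    nu 1%nat (m1 (vscal (Cmul Ci (Cmul Ci Ci)) z)) = 0 -> z = vzero V.

Definition Vac (V : CVS) (nu : forall n, Mat V n n -> R) n (x : Mat V n n) : Prop :=
  nu n (mopp x) = 0.
Definition hnorm (V : CVS) (nu : forall n, Mat V n n -> R) n (x : Mat V n n) : R :=
  Rmax (nu n x) (nu n (mopp x)).

Definition is_glb (S : R -> Prop) (m : R) : Prop :=
  (forall s, S s -> m <= s) /\ (forall b, (forall s, S s -> b <= s) -> b <= m).
Definition nu_max (V : CVS) (nu : forall n, Mat V n n -> R) n (x : Mat V n n) : R :=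
  epsilon (inhabits 0)
    (is_glb (fun r => exists p : Mat V n n, Vac nu p /\ r = hnorm nu (madd x p))).

Definition completely_gauge_contractive (V W : CVS) (nu : forall n, Mat V n n -> R)
  (om : forall n, Mat W n n -> R) (phi : V -> W) : Prop :=
  forall n (x : Mat V n n), (0 < n)%nat -> om n (mapm phi x) <= nu n x.

Definition real_cp (V W : CVS) (nu : forall n, Mat V n n -> R)
  (om : forall n, Mat W n n -> R) (phi : V -> W) : Prop :=
  forall n (x : Mat V n n), (0 < n)%nat -> Vac nu x -> Vac om (mapm phi x).

Definition real_cc (V W : CVS) (nu : forall n, Mat V n n -> R)
  (om : forall n, Mat W n n -> R) (phi : V -> W) : Prop :=
  forall n (x : Mat V n n), (0 < n)%nat -> hnorm om (mapm phi x) <= hnorm nu x.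

Definition real_cpcc (V W : CVS) (nu : forall n, Mat V n n -> R)
  (om : forall n, Mat W n n -> R) (phi : V -> W) : Prop :=
  real_cp nu om phi /\ real_cc nu om phi.

(** Part (i): [phi^(n)] commutes with [x |-> -x], so complete gauge contractivity applied
    to [x] and [-x] bounds both halves of [h'_n (phi^(n) x)], and forces
    [omega_n (- phi^(n) x) = 0] whenever [nu_n (- x) = 0].
    Part (ii): for [p] in [V_ac^n], write [phi^(n) x = phi^(n) (x + p) + phi^(n) (- p)];
    the second summand has gauge [0] by real complete positivity and the first is bounded
    by [h_n (x + p)] by real complete contractivity, so [omega_n (phi^(n) x)] is a lower
    bound of the set whose infimum is [nu_max^n x]. *)
From Pilot Require Import Defs.
From mathcomp Require Import ssreflect ssrfun ssrbool eqtype ssrnat seq fintype bigop.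
From Stdlib Require Import Reals Lra ClassicalEpsilon FunctionalExtensionality.
Open Scope R_scope.

Definition mzero (V : CVS) n : Mat V n n := fun _ _ => vzero V.
Arguments mzero {V n}.

Lemma mat_ext (V : Type) n m (A B : Mat V n m) : (forall i j, A i j = B i j) -> A = B.
Proof.
by move=> AB; apply: functional_extensionality => i; apply: functional_extensionality.
Qed.

Section VectorSpace.
Context {V : CVS}.

Lemma vaddI (a b c : V) : vadd a b = vadd a c -> b = c.
Proof.
move=> eq_ab_ac.
have : vadd (vopp a) (vadd a b) = vadd (vopp a) (vadd a c) by rewrite eq_ab_ac.
by rewrite !vaddA (vaddC (vopp a) a) vaddN !(vaddC (vzero V)) !vadd0.
Qed.

Lemma vscal0 (a : Defs.C) : vscal a (vzero V) = vzero V.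
Proof. by apply: (@vaddI (vscal a (vzero V))); rewrite -vscalDv !vadd0. Qed.

Lemma vopp0 : vopp (vzero V) = vzero V.
Proof. by apply: (@vaddI (vzero V)); rewrite vaddN vadd0. Qed.

Lemma moppZ {n} : mopp (@mzero V n) = mzero.
Proof. by apply: mat_ext => i j; apply: vopp0. Qed.

Lemma mrscalZ {n} t : mrscal t (@mzero V n) = mzero.
Proof. by apply: mat_ext => i j; apply: vscal0. Qed.

Lemma maddNK {n} (x p : Mat V n n) : madd (madd x p) (mopp p) = x.
Proof. by apply: mat_ext => i j; rewrite /madd /mopp -vaddA vaddN vadd0. Qed.

End VectorSpace.

Section LinearMap.
Variables (V W : CVS) (phi : V -> W).
Hypothesis phi_lin : is_linear phi.

Lemma linear0 : phi (vzero V) = vzero W.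
Proof. by apply: (@vaddI W (phi (vzero V))); rewrite -(proj1 phi_lin) !vadd0. Qed.

Lemma linearN v : phi (vopp v) = vopp (phi v).
Proof.
by apply: (@vaddI W (phi v)); rewrite vaddN -(proj1 phi_lin) vaddN linear0.
Qed.

Lemma mapmN n (x : Mat V n n) : mapm phi (mopp x) = mopp (mapm phi x).
Proof. by apply: mat_ext => i j; apply: linearN. Qed.

Lemma mapmD n (x y : Mat V n n) : mapm phi (madd x y) = madd (mapm phi x) (mapm phi y).
Proof. by apply: mat_ext => i j; apply: (proj1 phi_lin). Qed.

End LinearMap.

Section MatrixGauge.
Context {V : CVS} (nu : forall n, Mat V n n -> R).
Hypothesis nu_gauge : is_matrix_gauge nu.

Lemma gauge_ge0 {n} (x : Mat V n n) : (0 < n)%nat -> 0 <= nu n x.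
Proof. exact: (proj1 nu_gauge). Qed.

Lemma gaugeD {n} (x y : Mat V n n) : (0 < n)%nat -> nu n (madd x y) <= nu n x + nu n y.
Proof. exact: (proj1 (proj2 nu_gauge)). Qed.

Lemma gaugeZ {n} : (0 < n)%nat -> nu n mzero = 0.
Proof.
move=> n_gt0; rewrite -(@mrscalZ V n 0) (proj1 (proj2 (proj2 nu_gauge))) //; lra.
Qed.

Lemma Vac_mzero {n} : (0 < n)%nat -> Vac nu (@mzero V n).
Proof. by move=> n_gt0; rewrite /Vac moppZ gaugeZ. Qed.

Lemma gauge_le_hnorm {n} (x : Mat V n n) : nu n x <= hnorm nu x.
Proof. exact: Rmax_l. Qed.

Lemma hnorm_ge0 {n} (x : Mat V n n) : (0 < n)%nat -> 0 <= hnorm nu x.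
Proof. by move=> n_gt0; apply: Rle_trans (gauge_ge0 x n_gt0) (gauge_le_hnorm x). Qed.

End MatrixGauge.

Lemma glb_exists (S : R -> Prop) :
  (exists s, S s) -> (exists b, forall s, S s -> b <= s) -> exists m, is_glb S m.
Proof.
move=> [s Ss] [b b_lb].
have [l [l_ub l_least]] : {l | is_lub (fun r => S (- r)) l}.
  apply: completeness.
  - exists (- b) => r /b_lb; lra.
  - by exists (- s); rewrite Ropp_involutive.
exists (- l); split.
- move=> r Sr; have : - r <= l by apply: l_ub; rewrite Ropp_involutive.
  lra.
- move=> c c_lb; have : l <= - c by apply: l_least => r /c_lb; lra.
  lra.
Qed.

Lemma le_nu_max (V : CVS) (nu : forall n, Mat V n n -> R) n (x : Mat V n n) (b : R) :
  is_matrix_gauge nu -> (0 < n)%nat ->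
  (forall p, Vac nu p -> b <= hnorm nu (madd x p)) -> b <= nu_max nu x.
Proof.
move=> nu_gauge n_gt0 b_lb.
(* [nu_max] is an [epsilon] choice, so it is a true infimum only once one exists. *)
set S := fun r => exists p : Mat V n n, Vac nu p /\ r = hnorm nu (madd x p).
have S_glb : exists m, is_glb S m.
  apply: glb_exists.
  - by exists (hnorm nu (madd x mzero)), mzero; split; first exact: Vac_mzero.
  - by exists 0 => _ [p [_ ->]]; apply: hnorm_ge0.
apply: (proj2 (epsilon_spec (inhabits 0) (is_glb S) S_glb)).
by move=> _ [p [Vp ->]]; apply: b_lb.
Qed.

Section GaugeMaps.
Variables (V W : CVS) (nu : forall n, Mat V n n -> R) (om : forall n, Mat W n n -> R).
Variable phi : V -> W.
Hypotheses (om_gauge : is_matrix_gauge om) (phi_lin : is_linear phi).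

Lemma gauge_contractive_real_cpcc :
  completely_gauge_contractive nu om phi -> real_cpcc nu om phi.
Proof.
move=> phi_cgc; split=> n x n_gt0.
- rewrite /Vac -mapmN // => nu_mx0.
  have := phi_cgc n (mopp x) n_gt0; have := gauge_ge0 om om_gauge (mapm phi (mopp x)) n_gt0.
  lra.
- rewrite /hnorm -mapmN //; apply: Rmax_lub.
  + exact: Rle_trans (phi_cgc n x n_gt0) (Rmax_l _ _).
  + exact: Rle_trans (phi_cgc n (mopp x) n_gt0) (Rmax_r _ _).
Qed.

Lemma real_cpcc_le_hnorm n (x p : Mat V n n) :
  real_cpcc nu om phi -> (0 < n)%nat -> Vac nu p ->
  om n (mapm phi x) <= hnorm nu (madd x p).
Proof.
move=> [phi_cp phi_cc] n_gt0 Vp.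
rewrite -{1}(maddNK x p) mapmD //.
have om_mp0 : om n (mapm phi (mopp p)) = 0 by rewrite mapmN //; apply: phi_cp.
have := gaugeD om om_gauge (mapm phi (madd x p)) (mapm phi (mopp p)) n_gt0.
have := gauge_le_hnorm om (mapm phi (madd x p)).
have := phi_cc n (madd x p) n_gt0.
lra.
Qed.

End GaugeMaps.

Theorem proposition6p1 (V W : CVS) (nu : forall n, Mat V n n -> R)
  (om : forall n, Mat W n n -> R) (phi : V -> W) :
  is_matrix_gauge nu -> C_proper nu ->
  is_matrix_gauge om -> C_proper om ->
  is_linear phi ->
  (completely_gauge_contractive nu om phi -> real_cpcc nu om phi) /\
  (real_cpcc nu om phi ->
     forall n (x : Mat V n n), (0 < n)%nat -> om n (mapm phi x) <= nu_max nu x).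
Proof.
move=> nu_gauge _ om_gauge _ phi_lin; split.
- exact: gauge_contractive_real_cpcc.
- move=> phi_cpcc n x n_gt0; apply: le_nu_max => // p Vp.
  exact: real_cpcc_le_hnorm.
Qed.
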